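(* Let $r\in\mathbb N$ and let $M$ be the sub-add move matrix. For every $0\le i<2r$, each vertex of $\mathcal P_i$ has a unique child in $\Gamma_{M,\,2^r}$, and this child lies in $\mathcal P_{i+1}$. The vertex $(0,0)\in\mathcal P_{2r}$ is its own unique child.
   Context: The sub-add move matrix is $M=\begin{pmatrix}1&-1\\1&1\end{pmatrix}$. For $n\in\mathbb N$, $\Gamma_{M,\,n}$ is the directed graph with vertex set $\mathbb Z_n^2$ and arcs $((a,b),(a-b,a+b))$ for all $(a,b)\in\mathbb Z_n^2$ (computed mod $n$; loops allowed). If $({\bf v},{\bf w})$ is an arc, ${\bf v}$ is a parent of ${\bf w}$ and ${\bf w}$ a child of ${\bf v}$. For $n=2^r$, partition $\mathbb Z_{2^r}^2$ as follows: for $0\le t\le r-1$, $\mathcal P_{2t}$ is the set of pairs $(2^tx,2^ty)\in\mathbb Z_{2^r}^2$ with $x,y$ integers exactly one of which is odd, and $\mathcal P_{2t+1}$ is the set of pairs $(2^tx,2^ty)$ with $x,y$ both odd; $\mathcal P_{2r}=\{(0,0)\}$. (Parities are well defined since $x,y$ are determined modulo $2^{r-t}$ with $r-t\ge1$.) *)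

From mathcomp Require Import all_boot all_order all_algebra.
Set Implicit Arguments. Unset Strict Implicit. Unset Printing Implicit Defensive.
Import GRing.Theory Num.Theory.
Local Open Scope ring_scope.

(* Vertices of Gamma_{M, 2^r}: Z_{2^r}^2, residues represented by 'I_(2^r). *)
Definition vert (r : nat) : Type := ('I_(2 ^ r) * 'I_(2 ^ r))%type.

(* Arc relation of Gamma_{M,n} for M = [[1,-1],[1,1]] and n = 2^r:
   ((a,b),(a-b,a+b)) computed mod n.  Residues computed in int. *)
Definition subadd_arc (r : nat) (v w : vert r) : Prop :=
  let n := (2 ^ r)%N%:Z in
  (w.1 : nat)%:Z = (((v.1 : nat)%:Z - (v.2 : nat)%:Z) %% n)%Z /\
  (w.2 : nat)%:Z = (((v.1 : nat)%:Z + (v.2 : nat)%:Z) %% n)%Z.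

Definition Ppart (r i : nat) (v : vert r) : Prop :=
  let n := (2 ^ r)%N%:Z in
  (exists t : nat, (t < r)%N /\ i = (2 * t)%N /\
     exists x y : int, odd `|x|%N != odd `|y|%N /\
       (v.1 : nat)%:Z = (((2 ^ t)%N%:Z * x) %% n)%Z /\
       (v.2 : nat)%:Z = (((2 ^ t)%N%:Z * y) %% n)%Z)
  \/
  (exists t : nat, (t < r)%N /\ i = (2 * t).+1 /\
     exists x y : int, odd `|x|%N /\ odd `|y|%N /\
       (v.1 : nat)%:Z = (((2 ^ t)%N%:Z * x) %% n)%Z /\
       (v.2 : nat)%:Z = (((2 ^ t)%N%:Z * y) %% n)%Z)
  \/
  (i = (2 * r)%N /\ (v.1 : nat) = 0%N /\ (v.2 : nat) = 0%N).
Arguments subadd_arc r v w : clear implicits.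
Arguments Ppart r i v : clear implicits.

From mathcomp Require Import all_boot all_order all_algebra.
From mathcomp Require Import zify.
Set Implicit Arguments. Unset Strict Implicit. Unset Printing Implicit Defensive.
Import GRing.Theory Num.Theory.
Local Open Scope ring_scope.

(* The child of a vertex 2^t (x, y) is 2^t (x - y, x + y).  If exactly one of
   x, y is odd, then x - y and x + y are both odd.  If both are odd, then
   x - y = 2 x' and x + y = 2 y' with x' + y' = x odd, so the child is
   2^(t+1) (x', y') with x', y' of different parities; for t + 1 = r this
   is (0, 0), whose child is itself. *)

Lemma subadd_arc_functional r (v w1 w2 : vert r) :
  subadd_arc r v w1 -> subadd_arc r v w2 -> w1 = w2.
Proof.
case: w1 w2 => [a1 b1] [a2 b2] [/= ea1 eb1] [/= ea2 eb2].
rewrite -ea2 in ea1; rewrite -eb2 in eb1.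
by case: ea1 => /val_inj ->; case: eb1 => /val_inj ->.
Qed.

Lemma modz_ord (n : nat) (m : int) :
  (0 < n)%N -> exists o : 'I_n, (o : nat)%:Z = (m %% n%:Z)%Z.
Proof.
move=> n_gt0.
have mod_ge0 : (0 <= m %% n%:Z)%Z by rewrite modz_ge0 // eqz_nat -lt0n.
have mod_lt : (`|(m %% n%:Z)%Z| < n)%N.
  by rewrite -ltz_nat gez0_abs // ltz_pmod // ltz_nat.
by exists (Ordinal mod_lt); rewrite /= gez0_abs.
Qed.

Lemma subadd_arc_exists r (v : vert r) : exists w : vert r, subadd_arc r v w.
Proof.
have pow_gt0 : (0 < 2 ^ r)%N by rewrite expn_gt0.
have [a ea] := @modz_ord _ ((v.1 : nat)%:Z - (v.2 : nat)%:Z) pow_gt0.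
have [b eb] := @modz_ord _ ((v.1 : nat)%:Z + (v.2 : nat)%:Z) pow_gt0.
by exists (a, b).
Qed.

Lemma subadd_arc_zero r (v : vert r) :
  (v.1 : nat) = 0%N -> (v.2 : nat) = 0%N -> subadd_arc r v v.
Proof. by move=> e1 e2; split; rewrite e1 e2 /= mod0z. Qed.

Definition scaled_vert r (c x y : int) (v : vert r) : Prop :=
  (v.1 : nat)%:Z = ((c * x) %% (2 ^ r)%N%:Z)%Z /\
  (v.2 : nat)%:Z = ((c * y) %% (2 ^ r)%N%:Z)%Z.
Arguments scaled_vert r c x y v : clear implicits.

Lemma subadd_arc_scaled r (v w : vert r) (c x y : int) :
  subadd_arc r v w -> scaled_vert r c x y v ->
  scaled_vert r c (x - y) (x + y) w.
Proof.
rewrite /scaled_vert => -[-> ->] [-> ->]; rewrite mulrBr mulrDr.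
by split; rewrite ?modzDm // modzDml -modzDmr modzNm modzDmr.
Qed.

Lemma scaled_vert_pow_r r (x y : int) (v : vert r) :
  scaled_vert r (2 ^ r)%N%:Z x y v -> (v.1 : nat) = 0%N /\ (v.2 : nat) = 0%N.
Proof. by rewrite /scaled_vert !modzMr; case=> [[->] [->]]. Qed.

Lemma odd_subadd_of_mixed (x y : int) :
  odd (absz x) != odd (absz y) -> odd (absz (x - y)) /\ odd (absz (x + y)).
Proof. by lia. Qed.

Lemma subadd_halves_of_odd (x y : int) :
  odd (absz x) -> odd (absz y) ->
  exists x' y' : int,
    [/\ x - y = 2 * x', x + y = 2 * y' & odd (absz x') != odd (absz y')].
Proof.
by move=> x_odd y_odd; exists ((x - y) %/ 2)%Z, ((x + y) %/ 2)%Z; split; lia.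
Qed.

Lemma Ppart_child_even r t (x y : int) (v w : vert r) :
  (t < r)%N -> odd (absz x) != odd (absz y) ->
  scaled_vert r (2 ^ t)%N%:Z x y v -> subadd_arc r v w ->
  Ppart r (2 * t)%N.+1 w.
Proof.
move=> t_lt xy_mixed v_scaled vw.
have [sub_odd add_odd] := odd_subadd_of_mixed xy_mixed.
right; left; exists t; split=> //; split=> //.
by exists (x - y), (x + y); split=> //; split=> //; apply: subadd_arc_scaled vw _.
Qed.

Lemma Ppart_child_odd r t (x y : int) (v w : vert r) :
  (t < r)%N -> odd (absz x) -> odd (absz y) ->
  scaled_vert r (2 ^ t)%N%:Z x y v -> subadd_arc r v w ->
  Ppart r (2 * t)%N.+2 w.
Proof.
move=> t_lt x_odd y_odd v_scaled vw.
have [x' [y' [ex ey xy'_mixed]]] := subadd_halves_of_odd x_odd y_odd.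
have w_scaled : scaled_vert r (2 ^ t.+1)%N%:Z x' y' w.
  have := subadd_arc_scaled vw v_scaled.
  by rewrite ex ey /scaled_vert !mulrA expnSr PoszM.
have -> : (2 * t)%N.+2 = (2 * t.+1)%N by lia.
case: (ltnP t.+1 r) => [t1_lt | t1_ge].
- by left; exists t.+1; split=> //; split=> //; exists x', y'.
- have t1_eq : t.+1 = r by lia.
  rewrite t1_eq in w_scaled *.
  by right; right; split=> //; apply: scaled_vert_pow_r w_scaled.
Qed.

Lemma Ppart_child r i (v w : vert r) :
  (i < 2 * r)%N -> Ppart r i v -> subadd_arc r v w -> Ppart r i.+1 w.
Proof.
move=> i_lt [[t [t_lt [-> [x [y [xy_mixed v_scaled]]]]]]
            | [[t [t_lt [-> [x [y [x_odd [y_odd v_scaled]]]]]]] | [i_eq _]]].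
- exact: Ppart_child_even xy_mixed v_scaled.
- exact: Ppart_child_odd x_odd y_odd v_scaled.
- by rewrite i_eq ltnn in i_lt.
Qed.

Lemma Ppart_top r (v : vert r) :
  Ppart r (2 * r)%N v -> (v.1 : nat) = 0%N /\ (v.2 : nat) = 0%N.
Proof. by case=> [[t [t_lt [e _]]] | [[t [t_lt [e _]]] | [_ v_0]]] //; lia. Qed.

Theorem proposition5p2 (r : nat) :
  (forall (i : nat) (v : vert r), (i < 2 * r)%N -> Ppart r i v ->
     (exists! w : vert r, subadd_arc r v w) /\
     (forall w : vert r, subadd_arc r v w -> Ppart r i.+1 w))
  /\
  (forall v : vert r, Ppart r (2 * r) v ->
     forall w : vert r, subadd_arc r v w <-> w = v).
Proof.
split.
- move=> i v i_lt v_in; split; last by move=> w; apply: Ppart_child.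
  have [w vw] := subadd_arc_exists v.
  by exists w; split=> // w'; apply: subadd_arc_functional.
- move=> v /Ppart_top [v1_0 v2_0] w.
  have vv := subadd_arc_zero v1_0 v2_0.
  by split=> [vw | ->]; first exact: subadd_arc_functional vw vv.
Qed.
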